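(* Let $(b_j)$ be a wide-$(s)$ sequence in a Banach space $X$. Then there exist bounded sequences $(f_j)$ and $(g_j)$ in $X^*$ such that (i) $f_i(b_j)=1$ for all $j\ge i$ and $f_i(b_j)=0$ for all $j<i$; (ii) $g_j(b_i)=1$ for all $j\ge i$ and $g_j(b_i)=0$ for all $j<i$.
   Context: A semi-normalized sequence $(b_j)$ (i.e. $0<\inf_j\|b_j\|\le\sup_j\|b_j\|<\infty$) is wide-$(s)$ if it is a basic sequence such that $\sum_j c_j$ converges whenever $\sum_j c_jb_j$ converges. *)

From HB Require Import structures.
From mathcomp Require Import all_boot all_order all_algebra.
From mathcomp Require Import all_classical all_reals all_analysis.
Set Implicit Arguments. Unset Strict Implicit. Unset Printing Implicit Defensive.
Import Order.TTheory GRing.Theory Num.Theory.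
Import numFieldNormedType.Exports.
Local Open Scope classical_set_scope.
Local Open Scope ring_scope.

Definition psum {R : realType} {X : normedModType R} (c : nat -> R) (b : nat -> X)
  (n : nat) : X := \sum_(0 <= j < n) c j *: b j.

Definition span_seq {R : realType} {X : normedModType R} (b : nat -> X) : set X :=
  [set x | exists n (c : nat -> R), x = \sum_(0 <= j < n) c j *: b j].

Definition cspan_seq {R : realType} {X : normedModType R} (b : nat -> X) : set X :=
  closure (span_seq b).

Definition seminormalized {R : realType} {X : normedModType R} (b : nat -> X) : Prop :=
  exists a B : R, 0 < a /\ forall j, a <= `|b j| <= B.

(* basic sequence: a Schauder basis of its closed linear span, i.e. every x
   in the closed span has a unique expansion x = sum_j c_j b_j (norm-convergent
   partial sums). *)
Definition basic_seq {R : realType} {X : normedModType R} (b : nat -> X) : Prop :=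
  forall x, cspan_seq b x ->
    exists c : nat -> R,
      psum c b @ \oo --> x /\
      forall d : nat -> R, psum d b @ \oo --> x -> d = c.

Definition wide_s {R : realType} {X : normedModType R} (b : nat -> X) : Prop :=
  seminormalized b /\ basic_seq b /\
  forall c : nat -> R, cvgn (psum c b) -> cvgn (fun n => \sum_(0 <= j < n) c j).

(* a continuous (= bounded) linear functional on X, i.e. an element of X^* *)
Definition is_dual_elt {R : realType} {X : normedModType R} (f : X -> R) : Prop :=
  (forall (a : R) (x y : X), f (a *: x + y) = a * f x + f y) /\
  exists C : R, forall x, `|f x| <= C * `|x|.

Definition bounded_dual_seq {R : realType} {X : normedModType R}
  (f : nat -> X -> R) : Prop :=
  (forall i, is_dual_elt (f i)) /\
  exists M : R, forall i x, `|f i x| <= M * `|x|.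

(* The coefficient functionals e*_j of the basic sequence (b_j) live on the
   set Y of vectors with a convergent expansion, its closed span.  By the
   wide-(s) property the series sum_j e*_j(x) converges on Y, so
   f_i = sum_(j >= i) e*_j and g_j = sum_(i <= j) e*_i are well defined linear
   functionals on Y taking the required values on the b_j.  They are uniformly
   bounded: the seminorms `|P_k x| + `|sum_(j < k) e*_j x| (P_k the partial sum
   projections) are pointwise bounded on Y and closed along Cauchy sequences,
   and Baire's theorem, as in the proof of the open mapping theorem, bounds
   them uniformly by L * `|x|.  Hahn-Banach extends f_i and g_j to X. *)

From HB Require Import structures.
From mathcomp Require Import all_boot all_order all_algebra.
From mathcomp Require Import all_classical all_reals all_analysis.
From mathcomp Require Import ring lra.
Set Implicit Arguments. Unset Strict Implicit. Unset Printing Implicit Defensive.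
Import Order.TTheory GRing.Theory Num.Theory.
Import numFieldNormedType.Exports.
Local Open Scope classical_set_scope.
Local Open Scope ring_scope.

Section ClosedSubspaceBaire.
Variables (R : realType) (X : completeNormedModType R) (Y : set X).
Hypothesis Y0 : Y 0.
Hypothesis YZD : forall (a : R) x y, Y x -> Y y -> Y (a *: x + y).
Hypothesis Y_closed : closed Y.

(* [Y] is made a complete normed space in its own right, so that Baire's
   theorem applies to it. *)
Let Yp : pred X := fun x => `[< Y x >].

Let Yp_submod_closed : subsemimod_closed Yp.
Proof.
split; first split.
- exact/asboolP.
- move=> x y /asboolP Yx /asboolP Yy; apply/asboolP.
  by have := YZD 1 Yx Yy; rewrite scale1r.
- move=> a x /asboolP Yx; apply/asboolP.
  by have := YZD a Yx Y0; rewrite addr0.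
Qed.

HB.instance Definition _ := GRing.isSubmodClosed.Build R X Yp Yp_submod_closed.

Let Ysub := {x : X | Yp x}.
HB.instance Definition _ := [isSub for (@sval X Yp) : Ysub -> X].
HB.instance Definition _ := [Choice of Ysub by <:].
HB.instance Definition _ := [SubChoice_isSubLmodule of Ysub by <:].

Let Ysub_norm (y : Ysub) : R := `|val y|.

Let Ysub_normD x y : Ysub_norm (x + y) <= Ysub_norm x + Ysub_norm y.
Proof. exact: ler_normD. Qed.

Let Ysub_normZ (l : R) x : Ysub_norm (l *: x) = `|l| * Ysub_norm x.
Proof. exact: normrZ. Qed.

Let Ysub_norm_eq0 x : Ysub_norm x = 0 -> x = 0.
Proof. by move/eqP; rewrite normr_eq0 => /eqP x0; apply: val_inj. Qed.

HB.instance Definition _ :=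
  Lmodule_isNormed.Build R Ysub Ysub_normD Ysub_normZ Ysub_norm_eq0.

Let Ysub_complete (F : set_system Ysub) : ProperFilter F -> cauchy F -> cvg F.
Proof.
move=> PF cF.
have cvalF : cauchy (val @ F).
  apply: cauchy_exP => e e0.
  have [y Fy] := (cauchyP F).1 cF e e0.
  exists (val y); rewrite /= /fmap /=; apply: filterS Fy => z.
  by rewrite -!ball_normE /ball_ /=.
have [l Fl] := (cvg_ex _).1 (cauchy_cvg _ cvalF).
have Ypl : Yp l.
  apply/asboolP; apply: (closed_cvg (F := F) Y Y_closed _ l Fl).
  by apply: nearW => z; have /asboolP := valP z.
apply/cvg_ex; exists (exist _ l Ypl).
apply/cvgrPdist_lt => e e0.
exact: (cvgrPdist_lt _ _).1 Fl e e0.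
Qed.

HB.instance Definition _ := Uniform_isComplete.Build Ysub Ysub_complete.

Lemma closed_subspace_Baire (A : nat -> set X) :
  (forall y, Y y -> exists k, A k y) ->
  exists k x0 r, [/\ 0 < r, Y x0 & forall y, Y y -> `|y - x0| < r ->
    forall e, 0 < e -> exists a, [/\ Y a, A k a & `|y - a| < e]].
Proof.
move=> A_cover.
pose B k := [set z : Ysub | A k (val z)].
pose O k := ~` closure (B k).
have [k O_not_dense] : exists k, ~ dense (O k).
  apply/not_existsP => O_dense.
  have O_open_dense k : open (O k) /\ dense (O k).
    split; first exact/closed_openC/closed_closure.
    by have [//|/(O_dense k)] := pselect (dense (O k)).
  have := Baire O_open_dense.
  have -> : \bigcap_i O i = set0.
    apply/seteqP; split => // z Oz.
    have [k Akz] := A_cover _ (asboolW (valP z)).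
    exact/(Oz k I)/subset_closure.
  move=> /(_ setT) [].
  - by exists 0.
  - exact: openT.
  - by move=> x [].
have [U [[x [U_open Ux]] UO]] := denseNE O_not_dense.
have [r r0 rU] := (nbhs_ballP _ _).1 (open_nbhs_nbhs (conj U_open Ux)).
have U_closureB : U `<=` closure (B k).
  move=> z Uz; have [//|nBz] := pselect (closure (B k) z).
  by have : (U `&` O k) z by []; rewrite UO.
exists k, (val x), r; split => //; first exact: asboolW (valP x).
move=> y Yy yr e e0.
have Ypy : Yp y by apply/asboolP.
have Uy : U (exist _ y Ypy).
  by apply: rU; rewrite -ball_normE /= -[X in X < _]/(`|val x - y|) distrC.
have [z [Bz yz]] := U_closureB _ Uy (ball (exist _ y Ypy : Ysub) e) (nbhsx_ballx _ _ e0).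
by exists (val z); split => //; exact: asboolW (valP z).
Qed.

End ClosedSubspaceBaire.

Section SeminormFamilyBound.
Variables (R : realType) (X : completeNormedModType R) (Y : set X).
Variables (I : Type) (q : I -> X -> R).
Hypothesis Y0 : Y 0.
Hypothesis YZD : forall (a : R) x y, Y x -> Y y -> Y (a *: x + y).
Hypothesis Y_closed : closed Y.
Hypothesis qD : forall i x y, Y x -> Y y -> q i (x + y) <= q i x + q i y.
Hypothesis qZ : forall i (a : R) x, Y x -> q i (a *: x) = `|a| * q i x.
Hypothesis q_pointwise_bounded : forall x, Y x -> exists K, forall i, q i x <= K.
(* [q_closed] amounts to the completeness of [Y] for the norm [sup_i q i]; with
   Baire's theorem it yields the open-mapping-style bound below. *)
Hypothesis q_closed : forall (s : nat -> X) y K,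
  (forall m, Y (s m)) -> s @ \oo --> y ->
  (forall e, 0 < e -> exists N, forall m n, (N <= m)%N -> (N <= n)%N ->
     forall i, q i (s m - s n) <= e) ->
  (forall m i, q i (s m) <= K) -> forall i, q i y <= K.

Let YD x y : Y x -> Y y -> Y (x + y).
Proof. by move=> Yx Yy; have := YZD 1 Yx Yy; rewrite scale1r. Qed.

Let YZ (a : R) x : Y x -> Y (a *: x).
Proof. by move=> Yx; have := YZD a Yx Y0; rewrite addr0. Qed.

Let YB x y : Y x -> Y y -> Y (x - y).
Proof. by move=> Yx Yy; rewrite -scaleN1r; apply/YD/YZ. Qed.

Let q0 i : q i 0 = 0.
Proof. by have := qZ i 0 Y0; rewrite scale0r normr0 mul0r. Qed.

Let qB i x y : Y x -> Y y -> q i (x - y) <= q i x + q i y.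
Proof.
move=> Yx Yy; rewrite -scaleN1r; apply: le_trans (qD _ Yx (YZ _ Yy)) _.
by rewrite qZ // normrN normr1 mul1r.
Qed.

Let Y_sum (a : nat -> X) n m : (forall j, Y (a j)) -> Y (\sum_(n <= j < m) a j).
Proof. by move=> Ya; apply: (big_ind Y) => //; exact: YD. Qed.

Let q_sum i (a : nat -> X) n m : (forall j, Y (a j)) ->
  q i (\sum_(n <= j < m) a j) <= \sum_(n <= j < m) q i (a j).
Proof.
move=> Ya; elim: m => [|m IH]; first by rewrite !big_geq // q0.
have [nm|mn] := leqP n m; last by rewrite !big_geq // q0.
rewrite !big_nat_recr //=.
exact: le_trans (qD i (Y_sum n m Ya) (Ya m)) (lerD IH _).
Qed.

(* Baire's theorem makes one of the sets [{x | q <= k}] dense in a ball; the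
   difference of two approximants then approximates any small vector. *)
Lemma bounded_approximants : exists2 L, 0 <= L & forall y, Y y -> forall e, 0 < e ->
  exists a, [/\ Y a, forall i, q i a <= L * `|y| & `|y - a| < e].
Proof.
pose A (k : nat) := [set x | forall i, q i x <= k%:R].
have A_cover y : Y y -> exists k, A k y.
  move=> /q_pointwise_bounded [K qK]; exists (Num.truncn K).+1 => i.
  exact/ltW/(le_lt_trans (qK i))/truncnS_gt.
have [k [x0 [r [r_gt0 Yx0 Ak_dense]]]] := closed_subspace_Baire Y0 YZD Y_closed A_cover.
have small_approx z : Y z -> `|z| < r -> forall e, 0 < e ->
    exists a, [/\ Y a, forall i, q i a <= k%:R + k%:R & `|z - a| < e].
  move=> Yz zr e e_gt0.
  have e2_gt0 : 0 < e / 2 by rewrite divr_gt0.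
  have x0z_near : `|x0 + z - x0| < r by rewrite addrAC subrr add0r.
  have x0_near : `|x0 - x0| < r by rewrite subrr normr0.
  have [a1 [Ya1 Aa1 a1_near]] := Ak_dense _ (YD Yx0 Yz) x0z_near _ e2_gt0.
  have [a2 [Ya2 Aa2 a2_near]] := Ak_dense _ Yx0 x0_near _ e2_gt0.
  exists (a1 - a2); split; [exact: YB|by move=> i; apply/(le_trans (qB _ Ya1 Ya2))/lerD|].
  have -> : z - (a1 - a2) = (x0 + z - a1) - (x0 - a2).
    by rewrite !opprB [RHS]addrC !addrA subrK (addrC z).
  by apply: le_lt_trans (ler_normB _ _) _; rewrite (splitr e) ltrD.
exists (4 * k%:R / r); first by rewrite divr_ge0 // ltW.
move=> y Yy e e_gt0; have [->|y_neq0] := eqVneq y 0.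
  by exists 0; rewrite subrr normr0 mulr0; split => // i; rewrite q0.
have y_gt0 : 0 < `|y| by rewrite normr_gt0.
pose t := r / (2 * `|y|).
have t_gt0 : 0 < t by rewrite divr_gt0 // mulr_gt0.
have ty_lt_r : `|t *: y| < r.
  have -> : `|t *: y| = r / 2 by rewrite normrZ gtr0_norm // /t; field; rewrite gt_eqF.
  by rewrite ltr_pdivrMr // ltr_pMr // ltr1n.
have [a' [Ya' qa' ya']] := small_approx _ (YZ t Yy) ty_lt_r _ (mulr_gt0 e_gt0 t_gt0).
exists (t^-1 *: a'); split; first exact: YZ.
- move=> i; rewrite qZ // gtr0_norm ?invr_gt0 //.
  apply: le_trans (ler_wpM2l _ (qa' i)) _; first by rewrite invr_ge0 ltW.
  by rewrite [leLHS](_ : _ = 4 * k%:R / r * `|y|) // /t; field; rewrite !gt_eqF.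
- have -> : y - t^-1 *: a' = t^-1 *: (t *: y - a').
    by rewrite scalerBr scalerA mulVf ?scale1r // gt_eqF.
  rewrite normrZ gtr0_norm ?invr_gt0 // -(ltr_pM2l t_gt0) mulrA mulfV ?gt_eqF //.
  by rewrite mul1r mulrC.
Qed.

Section GeometricApproximation.
Variable L : R.
Hypothesis L_ge0 : 0 <= L.
Hypothesis L_approx : forall y, Y y -> forall e, 0 < e ->
  exists a, [/\ Y a, forall i, q i a <= L * `|y| & `|y - a| < e].
Variable eta : R.
Hypothesis eta_gt0 : 0 < eta.

Let eps n := eta * 2^-1 ^+ n.

Let eps_gt0 n : 0 < eps n.
Proof. by rewrite mulr_gt0 // exprn_gt0 // invr_gt0. Qed.

Let eps_cvg0 : eps @ \oo --> 0.
Proof.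
rewrite -(mulr0 eta); apply: cvgMr; apply: cvg_expr.
by rewrite gtr0_norm ?invr_gt0 // invf_lt1 // ltr1n.
Qed.

Let sum_eps n m : (n <= m)%N -> \sum_(n <= j < m) eps j <= 2 * eps n.
Proof.
move=> nm; rewrite (telescope_sumr_eq (fun k => - (2 * eps k)) _ nm).
  by have := eps_gt0 m; lra.
by move=> k _; rewrite /eps exprSr mulrA opprK; field.
Qed.

(* Peeling off successive approximants of the remainders. *)
Lemma approximating_series y : Y y -> exists a : nat -> X,
  [/\ forall n, Y (a n), forall i, q i (a 0%N) <= L * `|y|,
      forall n i, q i (a n.+1) <= L * eps n.+1 &
      forall n, `|y - \sum_(0 <= j < n.+1) a j| < eps n.+1].
Proof.
move=> Yy.
have approx_ex (p : X * R) : exists a, Y p.1 -> 0 < p.2 ->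
    [/\ Y a, forall i, q i a <= L * `|p.1| & `|p.1 - a| < p.2].
  case: p => x e /=; have [[Yx e_gt0]|] := pselect (Y x /\ 0 < e).
    by have [a ?] := L_approx Yx e_gt0; exists a.
  by move=> xe; exists 0 => Yx e_gt0; exfalso; exact: xe.
have [F F_approx] := choice approx_ex.
pose fix rem n := if n is n'.+1 then rem n' - F (rem n', eps n) else y.
pose a n := F (rem n, eps n.+1).
have Y_rem n : Y (rem n) /\ [/\ Y (a n), forall i, q i (a n) <= L * `|rem n|
                                & `|rem n.+1| < eps n.+1].
  elim: n => [|n [Yremn [Yan _ _]]].
    by split => //; exact: (F_approx (y, eps 1%N) Yy (eps_gt0 _)).
  have Yrem : Y (rem n.+1) by exact: YB.
  by split => //; exact: (F_approx (rem n.+1, eps n.+2) Yrem (eps_gt0 _)).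
have rem_sum n : y - \sum_(0 <= j < n) a j = rem n.
  elim: n => [|n IH]; first by rewrite big_geq // subr0.
  by rewrite big_nat_recr //= opprD addrA IH.
exists a; split.
- by move=> n; have [_ []] := Y_rem n.
- by have [_ [_ qa _]] := Y_rem 0%N.
- move=> n i; have [_ [_ qa _]] := Y_rem n.+1; have [_ [_ _ remn]] := Y_rem n.
  exact/(le_trans (qa i))/ler_wpM2l/ltW.
- by move=> n; rewrite rem_sum; have [_ []] := Y_rem n.
Qed.

Section ApproximatingSeries.
Variables (y : X) (a : nat -> X).
Hypothesis Ya : forall n, Y (a n).
Hypothesis qa0 : forall i, q i (a 0%N) <= L * `|y|.
Hypothesis qa : forall n i, q i (a n.+1) <= L * eps n.+1.
Hypothesis dist_a : forall n, `|y - \sum_(0 <= j < n.+1) a j| < eps n.+1.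

Let s m := \sum_(0 <= j < m) a j.

Let Ys m : Y (s m).
Proof. exact: Y_sum. Qed.

Let tail_bound n m i : (0 < n <= m)%N -> q i (s m - s n) <= 2 * L * eps n.
Proof.
case/andP=> n_gt0 nm; rewrite /s (big_cat_nat (leq0n n) nm) /= addrAC subrr add0r.
apply: le_trans (q_sum i n m Ya) _.
apply: (@le_trans _ _ (\sum_(n <= j < m) L * eps j)).
  apply: ler_sum_nat => -[|j] /andP[nj _]; first by rewrite leqNgt n_gt0 in nj.
  exact: qa.
by rewrite -mulr_sumr -mulrA mulrCA ler_wpM2l // sum_eps.
Qed.

Let partial_sum_bound m i : q i (s m) <= L * `|y| + L * eta.
Proof.
case: m => [|m]; first by rewrite /s big_geq // q0 addr_ge0 // mulr_ge0 // ltW.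
have s1 : s 1%N = a 0%N by rewrite /s big_nat1.
have -> : s m.+1 = a 0%N + (s m.+1 - s 1%N) by rewrite s1 addrCA subrr addr0.
apply: (le_trans (qD i (Ya 0%N) (YB (Ys m.+1) (Ys 1%N)))); apply: lerD (qa0 i) _.
have -> : L * eta = 2 * L * eps 1%N by rewrite /eps expr1; field.
exact: (@tail_bound 1%N m.+1 i).
Qed.

Let partial_sum_cauchy e : 0 < e -> exists N, forall m n, (N <= m)%N -> (N <= n)%N ->
  forall i, q i (s m - s n) <= e.
Proof.
move=> e_gt0.
have /cvgrPdist_le /(_ e e_gt0) small : (fun n => 4 * L * eps n) @ \oo --> 0.
  by rewrite -(mulr0 (4 * L)); exact: cvgMr.
have [N [N_ge1 /=]] := filter_ex (filterI (nbhs_infty_ge 1%N) small).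
rewrite sub0r normrN => epsN; exists N => m n Nm Nn i.
have -> : s m - s n = (s m - s N) - (s n - s N) by rewrite opprB addrA subrK.
apply: (le_trans (qB i (YB (Ys m) (Ys N)) (YB (Ys n) (Ys N)))).
apply: le_trans (lerD (@tail_bound N m i _) (@tail_bound N n i _)) _.
- by rewrite N_ge1.
- by rewrite N_ge1.
- by rewrite (_ : _ + _ = 4 * L * eps N) ?(le_trans (ler_norm _) epsN) //; ring.
Qed.

Let partial_sum_cvg : s @ \oo --> y.
Proof.
apply/cvgrPdist_le => e e_gt0.
have small := (cvgrPdist_le _ _).1 eps_cvg0 e e_gt0.
apply: filterS (filterI (nbhs_infty_ge 1%N) (small _)) => -[|m] [//= _].
rewrite sub0r normrN gtr0_norm // => epsm.
exact/ltW/(lt_le_trans (dist_a m)).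
Qed.

Lemma approximating_series_bound i : q i y <= L * `|y| + L * eta.
Proof. exact: (q_closed Ys partial_sum_cvg partial_sum_cauchy partial_sum_bound). Qed.

End ApproximatingSeries.

Lemma approximation_bound y i : Y y -> q i y <= L * `|y| + L * eta.
Proof.
move=> Yy; have [a [Ya qa0 qa dist_a]] := approximating_series Yy.
exact: (approximating_series_bound Ya qa0 qa dist_a).
Qed.

End GeometricApproximation.

Theorem seminorm_family_uniform_bound :
  exists2 L, 0 <= L & forall y i, Y y -> q i y <= L * `|y|.
Proof.
have [L L_ge0 L_approx] := bounded_approximants.
exists L => // y i Yy; apply/ler_addgt0Pr => e e_gt0.
have eta_gt0 : 0 < e / (L + 1) by rewrite divr_gt0 // ltr_wpDl.
apply: le_trans (approximation_bound L_ge0 L_approx eta_gt0 i Yy) _.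
by rewrite lerD2l mulrA ler_pdivrMr ?ltr_wpDl //; nra.
Qed.

End SeminormFamilyBound.

Section HahnBanach.
Variables (R : realType) (X : normedModType R) (Y : set X) (phi : X -> R) (C : R).
Hypothesis C_ge0 : 0 <= C.
Hypothesis Y0 : Y 0.
Hypothesis YZD : forall (a : R) x y, Y x -> Y y -> Y (a *: x + y).
Hypothesis phiZD :
  forall (a : R) x y, Y x -> Y y -> phi (a *: x + y) = a * phi x + phi y.
Hypothesis phi_bounded : forall y, Y y -> `|phi y| <= C * `|y|.

(* Extensions of [phi] dominated by [C * `|_|] are handled through their graphs,
   which are partially ordered by inclusion. *)
Definition extension_graph (G : set (X * R)) :=
  [/\ (forall x s t, G (x, s) -> G (x, t) -> s = t),
      (forall (a : R) x s y t, G (x, s) -> G (y, t) -> G (a *: x + y, a * s + t)),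
      (forall y, Y y -> G (y, phi y)) &
      (forall x s, G (x, s) -> s <= C * `|x|)].

Lemma extension_graph00 G : extension_graph G -> G (0, 0).
Proof.
case=> _ GZD Gphi _.
have := GZD (-1) _ _ _ _ (Gphi _ Y0) (Gphi _ Y0).
by rewrite scaleN1r addNr mulN1r addNr.
Qed.

Lemma extension_graphZ G (a : R) x s :
  extension_graph G -> G (x, s) -> G (a *: x, a * s).
Proof.
move=> gG Gx; case: (gG) => _ GZD _ _.
by have := GZD a _ _ _ _ Gx (extension_graph00 gG); rewrite !addr0.
Qed.

(* Zorn's lemma needs the union of the empty chain, hence the disjunct [set0]. *)
Let zorn_pred (G : set (X * R)) := G = set0 \/ extension_graph G.

Let zorn_pred_chain (F : set (set (X * R))) :
  F `<=` zorn_pred -> total_on F subset -> zorn_pred (\bigcup_(G in F) G).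
Proof.
move=> FP Ftot.
have [F_empty|] := pselect (forall G, F G -> G = set0).
  left; apply/seteqP; split => // p [G FG].
  by rewrite (F_empty _ FG).
move=> /existsNP [G0 /not_implyP [FG0 /eqP/set0P [p0 G0p0]]].
have member_graph G p : F G -> G p -> extension_graph G.
  by move=> FG Gp; case: (FP _ FG) => // Gempty; move: Gp; rewrite Gempty.
have common p q : (\bigcup_(G in F) G) p -> (\bigcup_(G in F) G) q ->
    exists G, [/\ F G, extension_graph G, G p & G q].
  move=> [G1 FG1 G1p] [G2 FG2 G2q].
  have [G12|G21] := Ftot _ _ FG1 FG2.
  - by exists G2; split => //; [exact: member_graph G2q|exact: G12].
  - by exists G1; split => //; [exact: member_graph G1p|exact: G21].
right; split.
- move=> x s t xs xt; have [G [_ [Gfun _ _ _] Gs Gt]] := common _ _ xs xt.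
  exact: Gfun Gs Gt.
- move=> a x s y t xs yt; have [G [FG [_ GZD _ _] Gs Gt]] := common _ _ xs yt.
  by exists G => //; exact: GZD.
- by move=> y Yy; exists G0 => //; case: (member_graph _ _ FG0 G0p0) => _ _ + _; apply.
- by move=> x s [G FG Gs]; case: (member_graph _ _ FG Gs) => _ _ _; apply.
Qed.

Section OneStepExtension.
Variables (G : set (X * R)) (x0 : X) (al : R).
Hypothesis gG : extension_graph G.
Hypothesis al_ge : forall d s, G (d, s) -> s - C * `|d - x0| <= al.
Hypothesis al_le : forall d s, G (d, s) -> al <= C * `|d + x0| - s.

Lemma one_step_extension_bound d s t :
  G (d, s) -> s + t * al <= C * `|d + t *: x0|.
Proof.
move=> Gd; have [->|t_neq0] := eqVneq t 0.
  by rewrite mul0r scale0r !addr0; case: gG => _ _ _; apply.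
have tV : t * t^-1 = 1 by rewrite mulfV.
have dtx0 : d + t *: x0 = t *: (t^-1 *: d + x0).
  by rewrite scalerDr scalerA tV scale1r.
case/orP: (lt_total t_neq0) => [t_lt0|t_gt0]; last first.
- have /(ler_wpM2l (ltW t_gt0)) := al_le (extension_graphZ t^-1 gG Gd).
  rewrite dtx0 normrZ gtr0_norm // mulrBr mulVKf //.
  set N := `|_ + x0|; nra.
- have Nt_ge0 : 0 <= - t by rewrite oppr_ge0 ltW.
  have /(ler_wpM2l Nt_ge0) := al_ge (extension_graphZ (- t^-1) gG Gd).
  rewrite dtx0 normrZ ltr0_norm // scaleNr -opprD normrN mulrBr.
  rewrite !mulNr !mulrN opprK mulVKf //.
  set N := `|_ + x0|; nra.
Qed.

End OneStepExtension.

Lemma extension_graph_extend G x0 : extension_graph G -> (forall s, ~ G (x0, s)) ->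
  exists2 G', extension_graph G' & G `<` G'.
Proof.
move=> gG x0_notin; have [Gfun GZD Gphi Gle] := gG.
have G00 := extension_graph00 gG.
pose L := [set l | exists d s, G (d, s) /\ l = s - C * `|d - x0|].
have L_le d' s' : G (d', s') -> ubound L (C * `|d' + x0| - s').
  move=> Gd' _ [d [s [Gd ->]]].
  have := Gle _ _ (GZD 1 _ _ _ _ Gd Gd'); rewrite scale1r mul1r => Gdd'.
  rewrite lerBrDr addrAC lerBlDr (le_trans Gdd') // -mulrDr ler_wpM2l //.
  have -> : d + d' = (d' + x0) + (d - x0) by rewrite addrACA subrr addr0 addrC.
  exact: ler_normD.
have L_sup_ge d s : G (d, s) -> s - C * `|d - x0| <= sup L.
  move=> Gd; apply: ub_le_sup; last by exists d, s.
  by exists (C * `|0 + x0| - 0); exact: L_le G00.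
have L_sup_le d s : G (d, s) -> sup L <= C * `|d + x0| - s.
  by move=> Gd; apply: ge_sup; [exists (0 - C * `|0 - x0|), 0, 0|exact: L_le].
pose G' := [set p | exists d s t, G (d, s) /\ p = (d + t *: x0, s + t * sup L)].
have GG' : G `<=` G'.
  by move=> [d s] Gd; exists d, s, 0; rewrite scale0r mul0r !addr0.
exists G'; last first.
  split => //; apply/existsNP; exists (x0, sup L); apply/not_implyP; split => //.
  by exists 0, 0, 1; rewrite scale1r mul1r !add0r.
split.
- move=> x s s' [d [u [t [Gd [-> ->]]]]] [d' [u' [t' [Gd' [dd' ->]]]]].
  have tt' : t = t'.
    have [//|tt'] := eqVneq t t'; exfalso.
    apply: (x0_notin ((t - t')^-1 * (u' - u))).
    have := extension_graphZ (t - t')^-1 gG (GZD (-1) _ _ _ _ Gd Gd').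
    rewrite scaleN1r mulN1r (addrC (- u)) (addrC (- d)).
    suff -> : d' - d = (t - t') *: x0 by rewrite scalerA mulVf ?scale1r // subr_eq0.
    rewrite scalerBl; apply: (@addIr _ (t' *: x0)).
    by rewrite subrK addrAC -dd' addrAC subrr add0r.
  move: dd' Gd'; rewrite -tt' => /addIr <- Gd'.
  by rewrite (Gfun _ _ _ Gd Gd').
- move=> a x s y v [d [u [t1 [Gd [-> ->]]]]] [d' [u' [t2 [Gd' [-> ->]]]]].
  exists (a *: d + d'), (a * u + u'), (a * t1 + t2); split; first exact: GZD.
  congr (_, _); last by ring.
  by rewrite scalerDr scalerA scalerDl addrACA.
- by move=> y Yy; apply: GG'; exact: Gphi.
- move=> x s [d [u [t [Gd [-> ->]]]]].
  exact: (one_step_extension_bound gG L_sup_ge L_sup_le).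
Qed.

Lemma hahn_banach : exists f : X -> R,
  [/\ forall (a : R) x y, f (a *: x + y) = a * f x + f y,
      forall x, `|f x| <= C * `|x| &
      forall y, Y y -> f y = phi y].
Proof.
have [A [[A0|gA] A_max]] := Zorn_bigcup zorn_pred_chain; last first.
  have A_total x : exists s, A (x, s).
    apply/not_existsP => x_notin.
    have [G' gG' AG'] := extension_graph_extend gA x_notin.
    by apply: (A_max G') => //; right.
  have [f fA] := choice A_total.
  have [Afun AZD Aphi Ale] := gA.
  have fZD (a : R) x y : f (a *: x + y) = a * f x + f y.
    by apply: (Afun (a *: x + y)); [exact: fA|exact: AZD].
  exists f; split => //.
  - move=> x; rewrite ler_norml Ale ?andbT //; have := Ale _ _ (fA (- x)).
    have := fZD (-1) x 0; rewrite addr0 scaleN1r mulN1r => ->.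
    have -> : f 0 = 0 by apply: (Afun 0) => //; exact: extension_graph00.
    by rewrite addr0 normrN lerNl.
  - by move=> y Yy; apply: (Afun y) => //; exact: Aphi.
exfalso; apply: (A_max [set p | Y p.1 /\ p.2 = phi p.1]); last first.
  right; split.
  - by move=> x s t [_ /= ->] [_ /= ->].
  - by move=> a x s y t [/= Yx ->] [/= Yy ->]; split; [exact: YZD|rewrite /= phiZD].
  - by move=> y Yy; split.
  - by move=> x s [/= Yx ->]; exact: le_trans (ler_norm _) (phi_bounded Yx).
rewrite A0; split => //; apply/existsNP; exists (0, phi 0).
by apply/not_implyP; split.
Qed.

End HahnBanach.

Lemma hahn_banach_seq (R : realType) (X : normedModType R) (Y : set X)
    (phi : nat -> X -> R) (C : R) :
  0 <= C -> Y 0 -> (forall (a : R) x y, Y x -> Y y -> Y (a *: x + y)) ->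
  (forall i (a : R) x y, Y x -> Y y -> phi i (a *: x + y) = a * phi i x + phi i y) ->
  (forall i y, Y y -> `|phi i y| <= C * `|y|) ->
  exists f, bounded_dual_seq f /\ forall i y, Y y -> f i y = phi i y.
Proof.
move=> C_ge0 Y0 YZD phiZD phi_bounded.
have [f fP] := choice (fun i => hahn_banach C_ge0 Y0 YZD (phiZD i) (phi_bounded i)).
exists f; split; last by move=> i; have [_ _] := fP i.
split; last by exists C => i x; have [_ + _] := fP i.
by move=> i; have [fZD f_bounded _] := fP i; split => //; exists C.
Qed.

Lemma cauchy_seq_cvg (R : realType) (V : completeNormedModType R) (u : nat -> V) :
  (forall e, 0 < e -> exists N, forall m n, (N <= m)%N -> (N <= n)%N ->
     `|u m - u n| <= e) ->
  cvgn u.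
Proof.
move=> u_cauchy; apply: cauchy_cvg; apply: cauchy_exP => e e_gt0.
have [N uN] := u_cauchy (e / 2) (divr_gt0 e_gt0 (ltr0n _ 2)).
exists (u N); exists N => // n /= Nn; rewrite -ball_normE /=.
by apply: le_lt_trans (uN N n (leqnn N) Nn) _; rewrite ltr_pdivrMr // ltr_pMr // ltr1n.
Qed.

Lemma cvgn_bounded (R : realType) (V : normedModType R) (u : nat -> V) :
  cvgn u -> exists M, forall n, `|u n| <= M.
Proof.
move=> /cvg_seq_bounded u_bounded.
have [M uM] := (ex_bound (PF := globally_properfilter (a := 0%N) I) _).1 u_bounded.
by exists M => n; exact: uM.
Qed.

Section Expansions.
Variables (R : realType) (X : normedModType R) (b : nat -> X).

Definition expandable : set X := [set x | exists c, psum c b @ \oo --> x].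

Lemma psumZD (a : R) c d n :
  psum (fun j => a * c j + d j) b n = a *: psum c b n + psum d b n.
Proof.
rewrite /psum scaler_sumr -big_split; apply: eq_bigr => j _.
by rewrite scalerDl scalerA.
Qed.

Lemma psum_cvgZD (a : R) c d x y :
  psum c b @ \oo --> x -> psum d b @ \oo --> y ->
  psum (fun j => a * c j + d j) b @ \oo --> a *: x + y.
Proof.
move=> cx dy; rewrite (_ : psum _ b = fun n => a *: psum c b n + psum d b n).
  by apply: cvgD => //; exact: cvgZr.
by apply/funext => n; exact: psumZD.
Qed.

Lemma psum0 : psum (fun=> 0) b = fun=> 0.
Proof. by apply/funext => n; rewrite /psum big1 // => j _; rewrite scale0r. Qed.

Lemma psum_delta j : psum (fun i => (i == j)%:R) b @ \oo --> b j.
Proof.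
apply: cvg_near_cst; apply: filterS (nbhs_infty_gt j) => n jn.
rewrite /psum (bigD1_seq j) ?mem_index_iota ?iota_uniq //= eqxx scale1r.
by rewrite big1 ?addr0 // => i /negPf ->; rewrite scale0r.
Qed.

Lemma expandable_cspan : basic_seq b -> expandable = cspan_seq b.
Proof.
move=> b_basic; apply/seteqP; split => x; last by move=> /b_basic [c [cx _]]; exists c.
move=> [c cx]; apply: (closed_cvg (F := \oo) _ (@closed_closure _ _) _ x cx).
by apply: nearW => n; apply: subset_closure; exists n, c.
Qed.

Lemma basic_seq_coef : basic_seq b ->
  exists coef : X -> nat -> R, forall x d, psum d b @ \oo --> x -> d = coef x.
Proof.
move=> b_basic.
have coef_ex (x : X) : exists c : nat -> R, forall d, psum d b @ \oo --> x -> d = c.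
  have [x_exp|no_exp] := pselect (expandable x); last first.
    by exists (fun=> 0) => d dx; exfalso; apply: no_exp; exists d.
  rewrite expandable_cspan // in x_exp.
  by have [c [_ c_unique]] := b_basic x x_exp; exists c.
by have [coef coefP] := choice coef_ex; exists coef.
Qed.

End Expansions.

Section WideSequence.
Variables (R : realType) (X : completeNormedModType R) (b : nat -> X).
Variables (a0 : R) (coef : X -> nat -> R).
Hypothesis a0_gt0 : 0 < a0.
Hypothesis b_ge : forall j, a0 <= `|b j|.
Hypothesis b_basic : basic_seq b.
Hypothesis b_wide :
  forall c, cvgn (psum c b) -> cvgn (fun n => \sum_(0 <= j < n) c j).
Hypothesis coef_unique : forall x d, psum d b @ \oo --> x -> d = coef x.

Local Notation Y := (expandable b).

Lemma coefP x : Y x -> psum (coef x) b @ \oo --> x.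
Proof. by move=> [c cx]; rewrite -(coef_unique cx). Qed.

Lemma expandable0 : Y 0.
Proof. by exists (fun=> 0); rewrite psum0; exact: cvg_cst. Qed.

Lemma expandableZD (a : R) x y : Y x -> Y y -> Y (a *: x + y).
Proof. by move=> [c cx] [d dy]; exists (fun j => a * c j + d j); exact: psum_cvgZD. Qed.

Lemma expandable_closed : closed Y.
Proof. by rewrite expandable_cspan //; exact: closed_closure. Qed.

Lemma coefZD (a : R) x y : Y x -> Y y ->
  coef (a *: x + y) = (fun j => a * coef x j + coef y j).
Proof. by move=> Yx Yy; symmetry; apply/coef_unique/psum_cvgZD; exact: coefP. Qed.

Lemma coef_basis j : coef (b j) = fun i => (i == j)%:R.
Proof. by symmetry; apply/coef_unique/psum_delta. Qed.

Lemma expandable_basis j : Y (b j).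
Proof. by exists (fun i => (i == j)%:R); exact: psum_delta. Qed.

Definition proj k x := psum (coef x) b k.
Definition csum k x := \sum_(0 <= j < k) coef x j.

Lemma projZD k (a : R) x y : Y x -> Y y -> proj k (a *: x + y) = a *: proj k x + proj k y.
Proof. by move=> Yx Yy; rewrite /proj coefZD // psumZD. Qed.

Lemma csumZD k (a : R) x y : Y x -> Y y -> csum k (a *: x + y) = a * csum k x + csum k y.
Proof. by move=> Yx Yy; rewrite /csum coefZD // mulr_sumr -big_split. Qed.

Lemma projB k x y : Y x -> Y y -> proj k (x - y) = proj k x - proj k y.
Proof. by move=> Yx Yy; rewrite -scaleN1r addrC projZD // scaleN1r addrC. Qed.

Lemma coefB j x y : Y x -> Y y -> coef (x - y) j = coef x j - coef y j.
Proof. by move=> Yx Yy; rewrite -scaleN1r addrC coefZD // mulN1r addrC. Qed.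

Lemma coef_le_proj x j : `|coef x j| <= (`|proj j.+1 x| + `|proj j x|) / a0.
Proof.
have coef_step : proj j.+1 x - proj j x = coef x j *: b j.
  by rewrite /proj /psum big_nat_recr //= addrAC subrr add0r.
rewrite ler_pdivlMr //; apply: le_trans (ler_normB _ _).
by rewrite coef_step normrZ ler_wpM2l.
Qed.

Definition proj_csum_norm k x := `|proj k x| + `|csum k x|.

Lemma proj_csum_normD k x y : Y x -> Y y ->
  proj_csum_norm k (x + y) <= proj_csum_norm k x + proj_csum_norm k y.
Proof.
move=> Yx Yy; have := projZD k 1 Yx Yy; have := csumZD k 1 Yx Yy.
rewrite !scale1r !mul1r /proj_csum_norm => -> ->; rewrite addrACA.
by apply: lerD; exact: ler_normD.
Qed.

Lemma coef0 : coef 0 = fun=> 0.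
Proof. by symmetry; apply: coef_unique; rewrite psum0; exact: cvg_cst. Qed.

Lemma proj_csum_normZ k (a : R) x : Y x ->
  proj_csum_norm k (a *: x) = `|a| * proj_csum_norm k x.
Proof.
move=> Yx; have := projZD k a Yx expandable0; have := csumZD k a Yx expandable0.
have -> : proj k 0 = 0 by rewrite /proj coef0 psum0.
have -> : csum k 0 = 0 by rewrite /csum coef0 big1.
by rewrite !addr0 /proj_csum_norm => -> ->; rewrite normrZ normrM mulrDr.
Qed.

Lemma proj_csum_norm_pointwise x : Y x -> exists K, forall k, proj_csum_norm k x <= K.
Proof.
move=> Yx; have proj_cvg : cvgn (proj^~ x) by apply/cvg_ex; exists x; exact: coefP.
have [M1 M1P] := cvgn_bounded proj_cvg.
have [M2 M2P] := cvgn_bounded (b_wide proj_cvg).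
by exists (M1 + M2) => k; apply: lerD; [exact: M1P|exact: M2P].
Qed.

Lemma psum_csum_cvg (c : nat -> nat -> R) d k :
  (forall j, (fun m => c m j) @ \oo --> d j) ->
  (fun m => psum (c m) b k) @ \oo --> psum d b k /\
  (fun m => \sum_(0 <= j < k) c m j) @ \oo --> \sum_(0 <= j < k) d j.
Proof.
move=> c_lim; split; apply: cvg_big => //; try exact: add_continuous.
by move=> j _; apply: cvgZl; exact: c_lim.
Qed.

Lemma coef_cvg_of_proj_cauchy (s : nat -> X) y :
  (forall m, Y (s m)) -> s @ \oo --> y ->
  (forall e, 0 < e -> exists N, forall m n, (N <= m)%N -> (N <= n)%N ->
     forall k, `|proj k (s m) - proj k (s n)| <= e) ->
  forall j, (fun m => coef (s m) j) @ \oo --> coef y j.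
Proof.
move=> Ys sy s_cauchy.
have coef_cvgn j : cvgn (fun m => coef (s m) j).
  apply: cauchy_seq_cvg => e e_gt0.
  have [N sN] := s_cauchy (e * a0 / 2) (divr_gt0 (mulr_gt0 e_gt0 a0_gt0) (ltr0n _ 2)).
  exists N => m n Nm Nn; rewrite -coefB //.
  apply: le_trans (coef_le_proj _ _) _.
  rewrite !projB // ler_pdivrMr // (splitr (e * a0)).
  exact: lerD (sN m n Nm Nn _) (sN m n Nm Nn _).
pose d j := lim ((fun m => coef (s m) j) @ \oo).
have proj_lim k := (psum_csum_cvg k coef_cvgn).1.
suff : psum d b @ \oo --> y by move=> /coef_unique <- j; exact: coef_cvgn.
apply/cvgrPdist_le => e e_gt0.
have e3_gt0 : 0 < e / 3 by rewrite divr_gt0.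
have [N sN] := s_cauchy _ e3_gt0.
have [m [Nm ysm]] :=
  filter_ex (filterI (nbhs_infty_ge N) ((cvgrPdist_le _ _).1 sy _ e3_gt0)).
have proj_sm_near k : `|proj k (s m) - psum d b k| <= e / 3.
  apply: (cvgr_to_le (cvg_norm (cvgB (cvg_cst _) (proj_lim k)))).
  by apply: filterS (nbhs_infty_ge N) => n Nn; exact: sN.
apply: filterS ((cvgrPdist_le _ _).1 (coefP (Ys m)) _ e3_gt0) => k sm_near.
have -> : y - psum d b k = (y - s m) + (s m - proj k (s m)) + (proj k (s m) - psum d b k).
  by rewrite !addrA !subrK.
have -> : e = e / 3 + e / 3 + e / 3 by field.
apply: le_trans (ler_normD _ _) _; apply: lerD => //.
by apply: le_trans (ler_normD _ _) _; apply: lerD.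
Qed.

Lemma proj_csum_norm_closed (s : nat -> X) y K :
  (forall m, Y (s m)) -> s @ \oo --> y ->
  (forall e, 0 < e -> exists N, forall m n, (N <= m)%N -> (N <= n)%N ->
     forall k, proj_csum_norm k (s m - s n) <= e) ->
  (forall m k, proj_csum_norm k (s m) <= K) -> forall k, proj_csum_norm k y <= K.
Proof.
move=> Ys sy s_cauchy s_bound k.
have proj_cauchy e : 0 < e -> exists N, forall m n, (N <= m)%N -> (N <= n)%N ->
    forall k, `|proj k (s m) - proj k (s n)| <= e.
  move=> /s_cauchy [N sN]; exists N => m n Nm Nn k'.
  by rewrite -projB //; apply: le_trans (sN m n Nm Nn k'); rewrite lerDl.
have [proj_lim csum_lim] :=
  psum_csum_cvg k (coef_cvg_of_proj_cauchy Ys sy proj_cauchy).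
apply: (cvgr_to_le (cvgD (cvg_norm proj_lim) (cvg_norm csum_lim))).
by apply: nearW => m; exact: s_bound.
Qed.

Lemma csum_uniform_bound :
  exists2 L, 0 <= L & forall y k, Y y -> `|csum k y| <= L * `|y|.
Proof.
have [L L_ge0 L_bound] := seminorm_family_uniform_bound expandable0 expandableZD
  expandable_closed proj_csum_normD proj_csum_normZ proj_csum_norm_pointwise
  proj_csum_norm_closed.
exists L => // y k Yy; apply: le_trans (L_bound y k Yy).
by rewrite lerDr.
Qed.

Definition coef_series x := lim ((fun k => csum k x) @ \oo).

Lemma coef_series_cvg x : Y x -> (fun k => csum k x) @ \oo --> coef_series x.
Proof. by move=> Yx; apply: b_wide; apply/cvg_ex; exists x; exact: coefP. Qed.

Lemma coef_seriesZD (a : R) x y : Y x -> Y y ->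
  coef_series (a *: x + y) = a * coef_series x + coef_series y.
Proof.
move=> Yx Yy; apply: cvg_lim => //.
rewrite (_ : (fun k => _) = fun k => a * csum k x + csum k y).
  by apply: cvgD; [apply: cvgMr; exact: coef_series_cvg|exact: coef_series_cvg].
by apply/funext => k; rewrite csumZD.
Qed.

Lemma csum_basis k j : csum k (b j) = (j < k)%:R.
Proof.
rewrite /csum coef_basis; have [jk|kj] := ltnP j k.
  rewrite (bigD1_seq j) ?mem_index_iota ?iota_uniq //= eqxx.
  by rewrite big1 ?addr0 // => i /negPf ->.
rewrite big1_seq // => i; rewrite mem_index_iota => /andP[_ ik].
by rewrite ltn_eqF // (leq_trans ik kj).
Qed.

Lemma coef_series_basis j : coef_series (b j) = 1.
Proof.
apply: cvg_lim => //; apply: cvg_near_cst.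
by apply: filterS (nbhs_infty_gt j) => k jk; rewrite csum_basis jk.
Qed.

Lemma tail_functionals : exists f : nat -> X -> R, [/\ bounded_dual_seq f,
  forall i j, (i <= j)%N -> f i (b j) = 1 & forall i j, (j < i)%N -> f i (b j) = 0].
Proof.
have [L L_ge0 csum_bound] := csum_uniform_bound.
have coef_series_bound y : Y y -> `|coef_series y| <= L * `|y|.
  move=> Yy; apply: (cvgr_to_le (cvg_norm (coef_series_cvg Yy))).
  by apply: nearW => k; exact: csum_bound.
have [f [f_dual f_ext]] : exists f, bounded_dual_seq f /\
    forall i y, Y y -> f i y = coef_series y - csum i y.
  apply: (hahn_banach_seq (mulr_ge0 (ler0n _ 2) L_ge0) expandable0 expandableZD).
    by move=> i a x y Yx Yy; rewrite coef_seriesZD // csumZD //; ring.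
  move=> i y Yy; apply: le_trans (ler_normB _ _) _.
  rewrite (_ : 2 * L * `|y| = L * `|y| + L * `|y|); last by ring.
  exact: lerD (coef_series_bound _ Yy) (csum_bound y i Yy).
have f_basis i j : f i (b j) = 1 - (j < i)%:R.
  by rewrite f_ext ?coef_series_basis ?csum_basis //; exact: expandable_basis.
by exists f; split => // i j ij; rewrite f_basis ?ij ?subrr // ltnNge ij subr0.
Qed.

Lemma head_functionals : exists g : nat -> X -> R, [/\ bounded_dual_seq g,
  forall i j, (i <= j)%N -> g j (b i) = 1 & forall i j, (j < i)%N -> g j (b i) = 0].
Proof.
have [L L_ge0 csum_bound] := csum_uniform_bound.
have [g [g_dual g_ext]] : exists g, bounded_dual_seq g /\
    forall j y, Y y -> g j y = csum j.+1 y.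
  apply: (hahn_banach_seq L_ge0 expandable0 expandableZD) => [j a x y Yx Yy|j y Yy].
    exact: csumZD.
  exact: csum_bound.
have g_basis j i : g j (b i) = (i <= j)%:R.
  by rewrite g_ext ?csum_basis //; exact: expandable_basis.
by exists g; split => // i j ij; rewrite g_basis ?ij // leqNgt ij.
Qed.

End WideSequence.

Theorem proposition9 (R : realType) (X : completeNormedModType R) (b : nat -> X) :
  wide_s b ->
  exists f g : nat -> X -> R,
    bounded_dual_seq f /\ bounded_dual_seq g /\
    (forall i j : nat, (i <= j)%N -> f i (b j) = 1) /\
    (forall i j : nat, (j < i)%N -> f i (b j) = 0) /\
    (forall i j : nat, (i <= j)%N -> g j (b i) = 1) /\
    (forall i j : nat, (j < i)%N -> g j (b i) = 0).
Proof.
move=> [[a0 [B [a0_gt0 b_bounds]]] [b_basic b_wide]].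
have b_ge j : a0 <= `|b j| by case/andP: (b_bounds j).
have [coef coef_unique] := basic_seq_coef b_basic.
have [f [f_dual f1 f0]] := tail_functionals a0_gt0 b_ge b_basic b_wide coef_unique.
have [g [g_dual g1 g0]] := head_functionals a0_gt0 b_ge b_basic b_wide coef_unique.
by exists f, g.
Qed.
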